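(* Let $n\le l$ be positive integers, let $L_l=\{a_1<\dots<a_l\}$ be the linearly ordered semilattice of $l$ elements, and let $t(X)=s(X)$ be an equation over $L_l$ in the variables $X=\{x_1,\dots,x_n\}$ in which every variable occurs, with solution set $Y=V(t(X)=s(X))$. Then $Y=\bigcup_\sigma Y_\sigma$, the union over all permutations $\sigma$ of $\{1,\dots,n\}$ of the first or second kind, is the decomposition of $Y$ into its irreducible components (i.e. each $Y_\sigma$ is irreducible and $Y_\sigma\not\subseteq Y_{\sigma'}$ for $\sigma\neq\sigma'$). In particular, the number of irreducible components of $Y$ equals the number of permutations of $\{1,\dots,n\}$ of the first and second kind.
   Context: $L_l$ has multiplication $a_ia_j=a_{\min(i,j)}$. A term is a commutative word in $x_1,\dots,x_n$; $\mathrm{Var}(t)$ is the set of variables occurring in $t$. An equation is an ordered pair of terms $t(X)=s(X)$; $P\in L_l^n$ is a solution if $t(P)=s(P)$; $x\le y$ abbreviates $xy=x$. For a system $S$, $V(S)$ is its set of common solutions; $Y\subseteq L_l^n$ is algebraic if $Y=V(S)$ for some system $S$; an algebraic set is irreducible if it is not a proper finite union of other algebraic sets. Every algebraic set is uniquely (up to order) a finite union $Y_1\cup\dots\cup Y_m$ of irreducible algebraic sets with $Y_i\not\subseteq Y_j$ for $i\ne j$; these $Y_i$ are its irreducible components. A permutation $\sigma$ of $\{1,\dots,n\}$ is of the first kind if $x_{\sigma(1)}\in\mathrm{Var}(t)\cap\mathrm{Var}(s)$, and of the second kind if $x_{\sigma(1)}\in\mathrm{Var}(s)\setminus\mathrm{Var}(t)$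 and $x_{\sigma(2)}\in\mathrm{Var}(t)\setminus\mathrm{Var}(s)$. For $\sigma$ of the first kind, $Y_\sigma=V(\{x_{\sigma(i)}\le x_{\sigma(i+1)}:1\le i\le n-1\})$; for $\sigma$ of the second kind, $Y_\sigma=V(\{x_{\sigma(1)}=x_{\sigma(2)}\}\cup\{x_{\sigma(i)}\le x_{\sigma(i+1)}:2\le i\le n-1\})$. *)

From mathcomp Require Import all_boot.
From mathcomp Require Import perm.
Set Implicit Arguments. Unset Strict Implicit. Unset Printing Implicit Defensive.

(* L_l is modelled by 'I_l, where the ordinal i stands for a_{i+1};
   the product a_i a_j = a_{min(i,j)} is minn on the underlying naturals.
   A point of L_l^n is a function 'I_n -> 'I_l (variable x_{k+1} is k : 'I_n). *)
Definition point (n l : nat) := 'I_n -> 'I_l.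

(* A term is a (nonempty) commutative word in the variables: a first
   variable followed by a list of further variables (repetitions allowed). *)
Definition term (n : nat) := ('I_n * seq 'I_n)%type.

Definition Var n (t : term n) : seq 'I_n := t.1 :: t.2.

Definition eval n l (P : point n l) (t : term n) : nat :=
  foldr (fun i m => minn (P i) m) (P t.1 : nat) t.2.

Definition equation (n : nat) := (term n * term n)%type.

Definition is_solution n l (P : point n l) (e : equation n) : Prop :=
  eval P e.1 = eval P e.2.

Definition pset (n l : nat) := point n l -> Prop.
Definition system (n : nat) := equation n -> Prop.

Definition V n l (S : system n) : pset n l :=
  fun P => forall e, S e -> is_solution P e.

Definition set_eq n l (A B : pset n l) : Prop := forall P, A P <-> B P.
Definition psubset n l (A B : pset n l) : Prop := forall P, A P -> B P.

Definition algebraic n l (Y : pset n l) : Prop :=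
  exists S : system n, set_eq Y (@V n l S).

Definition irreducible n l (Y : pset n l) : Prop :=
  algebraic Y /\
  forall (m : nat) (Ys : 'I_m -> pset n l),
    (forall i, algebraic (Ys i)) ->
    set_eq Y (fun P => exists i, Ys i P) ->
    exists i, set_eq (Ys i) Y.

(* The equation x <= y, i.e. x y = x, and the equation x = y. *)
Definition le_eqn n (x y : 'I_n) : equation n := ((x, [:: y]), (x, [::])).
Definition eq_eqn n (x y : 'I_n) : equation n := ((x, [::]), (y, [::])).

(* Permutations of the first and second kind (position k : 'I_n with val k = 0
   is position 1 of the paper, val k = 1 is position 2). *)
Definition first_kind n (e : equation n) (sigma : {perm 'I_n}) : bool :=
  [exists i0 : 'I_n, (val i0 == 0) &&
     ((sigma i0 \in Var e.1) && (sigma i0 \in Var e.2))].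

Definition second_kind n (e : equation n) (sigma : {perm 'I_n}) : bool :=
  [exists i0 : 'I_n, exists i1 : 'I_n, [&& val i0 == 0, val i1 == 1,
     (sigma i0 \in Var e.2) && (sigma i0 \notin Var e.1) &
     (sigma i1 \in Var e.1) && (sigma i1 \notin Var e.2)]].

Definition sys_first n (sigma : {perm 'I_n}) : system n :=
  fun e => exists i j : 'I_n, val j = (val i).+1 /\ e = le_eqn (sigma i) (sigma j).

Definition sys_second n (sigma : {perm 'I_n}) : system n :=
  fun e =>
    (exists i0 i1 : 'I_n, val i0 = 0 /\ val i1 = 1 /\ e = eq_eqn (sigma i0) (sigma i1))
    \/ (exists i j : 'I_n, 1 <= val i /\ val j = (val i).+1 /\
          e = le_eqn (sigma i) (sigma j)).

Definition Ysigma n l (e : equation n) (sigma : {perm 'I_n}) : pset n l :=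
  if first_kind e sigma then @V n l (sys_first sigma) else @V n l (sys_second sigma).

From mathcomp Require Import all_boot.
From mathcomp Require Import perm.
From mathcomp Require Import zify.
Set Implicit Arguments. Unset Strict Implicit. Unset Printing Implicit Defensive.

(* A point P lies in Y_sigma iff P o sigma is monotone for a rank function on
   positions, in which the first two positions share rank 0 when sigma is of the
   second kind. A term evaluates to the least value of its variables, so a
   solution of t = s attains its global minimum on a variable of t and on one of
   s; sorting the variables by value with these minima in front yields a sigma of
   the first or second kind with P in Y_sigma, and conversely every point of
   Y_sigma solves t = s.
   Since n <= l, Y_sigma contains the generic point Q_sigma sending the variable
   at position i to its rank. Every P in Y_sigma is a monotone image of Q_sigma,
   hence satisfies every equation that Q_sigma satisfies, so Y_sigma is
   irreducible. Finally, Q_sigma in Y_sigma' forces sigma' to start with the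
   same variable as sigma, hence to be of the same kind, and then
   sigma^-1 sigma' is a monotone permutation, i.e. the identity. *)

Section Evaluation.
Variables (n l : nat) (P : point n l).

Lemma eval_le (t : term n) x : x \in Var t -> eval P t <= P x.
Proof.
case: t => y s; rewrite /eval /Var /=; elim: s => [|z s IH] /=.
  by rewrite inE => /eqP ->.
rewrite !inE => /or3P[xy | /eqP-> | xs]; rewrite geq_min ?leqnn //.
  by rewrite IH ?inE ?xy ?orbT.
by rewrite IH ?inE ?xs ?orbT.
Qed.

Lemma eval_attained (t : term n) : exists2 x, x \in Var t & eval P t = P x.
Proof.
case: t => y s; rewrite /eval /Var /=; elim: s => [|z s [x xs IH]] /=.
  by exists y; rewrite ?inE.
case: (leqP (P z) (foldr (fun i m => minn (P i) m) (P y) s)) => _.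
  by exists z; rewrite // !inE eqxx orbT.
by exists x => //; move: xs; rewrite !inE => /orP[-> | ->]; rewrite ?orbT.
Qed.

Lemma eval_argmin (t : term n) x :
  x \in Var t -> (forall z, z \in Var t -> P x <= P z) -> eval P t = P x.
Proof.
move=> xt xmin; apply/eqP; rewrite eqn_leq eval_le //=.
by have [z zt ->] := eval_attained t; apply: xmin.
Qed.

Lemma is_solution_le (x y : 'I_n) : is_solution P (le_eqn x y) <-> P x <= P y.
Proof. exact: (rwP minn_idPr). Qed.

End Evaluation.

Lemma is_solution_refine n l (P Q : point n l) (e : equation n) :
  (forall x y, Q x <= Q y -> P x <= P y) -> is_solution Q e -> is_solution P e.
Proof.
move=> QP; suff evalQP t : exists2 x, eval Q t = Q x & eval P t = P x.
  rewrite /is_solution; have [x -> ->] := evalQP e.1; have [y -> ->] := evalQP e.2.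
  by move=> Qxy; apply/eqP; rewrite eqn_leq !QP ?Qxy.
have [x xt Qx] := eval_attained Q t; exists x => //.
by apply: eval_argmin xt _ => z zt; apply: QP; rewrite -Qx eval_le.
Qed.

Lemma irreducible_generic n l (Y : pset n l) (Q : point n l) :
  algebraic Y -> Y Q ->
  (forall P e, Y P -> is_solution Q e -> is_solution P e) -> irreducible Y.
Proof.
move=> algY YQ QY; split=> // m Ys algYs defY.
have [i YiQ] := proj1 (defY Q) YQ.
exists i => P; split=> [YiP | YP]; first by apply/defY; exists i.
have [S defYi] := algYs i; apply/defYi => e' Se'.
by apply: QY YP _; apply: (proj1 (defYi Q) YiQ).
Qed.

Lemma ord_at n k : k < n -> exists i : 'I_n, i = k :> nat.
Proof. by move=> kn; exists (Ordinal kn). Qed.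

Lemma ord_chain n c (f : 'I_n -> nat) :
  (forall i j : 'I_n, c <= i -> val j = (val i).+1 -> f i <= f j) ->
  forall i j : 'I_n, c <= i -> i <= j -> f i <= f j.
Proof.
move=> step i j ci ij; pose g k := f (insubd i k).
have gE (k : 'I_n) : g k = f k by rewrite /g valKd.
have insubdE k : k < n -> insubd i k = k :> nat by move=> kn; rewrite val_insubd kn.
rewrite -!gE; apply: (@homo_leq_in _ [pred k | c <= k < n] g leq) => //=.
- exact: leq_trans.
- by move=> a b /andP[ca _] /andP[_ bn] k /andP[ak kb]; rewrite inE; lia.
- move=> k /[!inE] /andP[ck _] /andP[_ k1n].
  by apply: step; rewrite /= !insubdE // ltnW.
- by rewrite inE ci ltn_ord.
- by rewrite inE (leq_trans ci ij) ltn_ord.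
Qed.

Lemma perm_homo_eq1 n (pi : {perm 'I_n}) :
  (forall i j : 'I_n, i <= j -> pi i <= pi j) -> pi = 1%g.
Proof.
move=> pi_homo; have sorted_enum : sorted (relpre val leq) (enum 'I_n).
  by rewrite -sorted_map val_enum_ord iota_sorted.
have pi_enum : perm_eq (map pi (enum 'I_n)) (enum 'I_n).
  apply: uniq_perm; rewrite ?enum_uniq ?(map_inj_uniq perm_inj) ?enum_uniq // => x.
  by rewrite mem_enum -(permKV pi x) map_f ?mem_enum.
have : map val (map pi (enum 'I_n)) = map val (enum 'I_n).
  apply: (sorted_eq leq_trans anti_leq); last exact: perm_map.
    by rewrite sorted_map; apply: homo_sorted sorted_enum.
  by rewrite val_enum_ord iota_sorted.
rewrite -map_comp => /eq_in_map pi_id; apply/permP => i.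
by apply: val_inj; rewrite perm1 -[RHS]/(val i) -(pi_id i) ?mem_enum.
Qed.

Lemma sorting_perm n (K : 'I_n -> nat) :
  exists sigma : {perm 'I_n}, forall i j : 'I_n, i <= j -> K (sigma i) <= K (sigma j).
Proof.
case: n K => [|n] K; first by exists 1%g => -[].
pose s := sort (relpre K leq) (enum 'I_n.+1).
have size_s : size s = n.+1 by rewrite size_sort size_enum_ord.
have nth_inj : injective (fun i : 'I_n.+1 => nth ord0 s i).
  move=> i j /eqP; rewrite nth_uniq ?size_s ?sort_uniq ?enum_uniq //.
  by move/eqP/val_inj.
exists (perm nth_inj) => i j ij; rewrite !permE.
apply: (sorted_leq_nth (leT := relpre K leq)) => //; rewrite ?inE ?size_s //.
- by move=> ? ? ?; apply: leq_trans.
- by move=> ?; apply: leqnn.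
- by apply: sort_sorted => x y; apply: leq_total.
Qed.

Lemma sorting_perm_at n (K : 'I_n -> nat) (sigma : {perm 'I_n}) (i : 'I_n) x :
  (forall i j : 'I_n, i <= j -> K (sigma i) <= K (sigma j)) -> i <= (sigma^-1)%g x ->
  (forall k : 'I_n, i <= k -> sigma k != x -> K x < K (sigma k)) -> sigma i = x.
Proof.
move=> K_homo ix x_min; apply/eqP; apply: contraT => ne.
by have := K_homo _ _ ix; rewrite permKV leqNgt x_min.
Qed.

(* The rank of position k in the chain defining Y_sigma; [b] is [first_kind e sigma]. *)
Definition pos_rank (b : bool) (k : nat) := if b then k else k.-1.

Lemma rank_perm_eq1 n b (pi : {perm 'I_n}) (i0 : 'I_n) :
  i0 = 0 :> nat -> pi i0 = i0 ->
  (forall i j : 'I_n, pos_rank b i <= pos_rank b j -> pos_rank b (pi i) <= pos_rank b (pi j)) ->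
  pi = 1%g.
Proof.
move=> v0 pi0 pi_homo; apply: perm_homo_eq1 => i j ij.
have pi_pos (k : 'I_n) : 0 < k -> 0 < pi k.
  rewrite !lt0n; apply: contra => /eqP pik0.
  have : pi k = pi i0 by rewrite pi0; apply: val_inj; rewrite /= pik0 v0.
  by move/perm_inj ->; rewrite v0.
case: (posnP i) => [i_0 | i_pos].
  have -> : i = i0 by apply: val_inj; rewrite /= i_0 v0.
  by rewrite pi0 v0.
have := pi_homo i j; have := pi_pos _ i_pos; have := pi_pos j (leq_trans i_pos ij).
by clear pi_homo; rewrite /pos_rank; case: b; lia.
Qed.

Section Components.
Variables (n l : nat) (e : equation n).

Definition of_kind (sigma : {perm 'I_n}) := first_kind e sigma || second_kind e sigma.

Lemma of_kind_gt0 sigma : of_kind sigma -> 0 < n.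
Proof. by case/orP=> /existsP[i _]; apply: leq_ltn_trans (ltn_ord i). Qed.

Lemma first_kindE sigma (i0 : 'I_n) : i0 = 0 :> nat ->
  first_kind e sigma = (sigma i0 \in Var e.1) && (sigma i0 \in Var e.2).
Proof.
move=> v0; apply/existsP/idP => [[i /andP[/eqP vi]] | h]; last by exists i0; rewrite /= v0.
by have -> : i = i0 by apply: val_inj; rewrite /= vi.
Qed.

Lemma second_kindE sigma (i0 i1 : 'I_n) : i0 = 0 :> nat -> i1 = 1 :> nat ->
  second_kind e sigma = [&& sigma i0 \in Var e.2, sigma i0 \notin Var e.1,
                            sigma i1 \in Var e.1 & sigma i1 \notin Var e.2].
Proof.
move=> v0 v1; apply/existsP/idP => [[j0 /existsP[j1 /and3P[/eqP w0 /eqP w1]]] | h].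
  have -> : i0 = j0 by apply: val_inj; rewrite /= v0 w0.
  have -> : i1 = j1 by apply: val_inj; rewrite /= v1 w1.
  by rewrite !andbA.
by exists i0; apply/existsP; exists i1; rewrite /= v0 v1 -!andbA.
Qed.

Lemma second_kind_gt1 sigma : second_kind e sigma -> 1 < n.
Proof. by case/existsP=> i0 /existsP[i1 /and3P[_ /eqP v1 _]]; rewrite -v1 ltn_ord. Qed.

Lemma of_kind_head sigma (i0 : 'I_n) : of_kind sigma -> i0 = 0 :> nat -> sigma i0 \in Var e.2.
Proof.
move=> + v0; case/orP=> [|kind2]; first by rewrite (first_kindE _ v0) => /andP[].
have [i1 v1] := ord_at (second_kind_gt1 kind2).
by move: kind2; rewrite (second_kindE _ v0 v1) => /andP[].
Qed.

Lemma of_kind_first_kindE sigma (i0 : 'I_n) :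
  of_kind sigma -> i0 = 0 :> nat -> first_kind e sigma = (sigma i0 \in Var e.1).
Proof. by move=> kind v0; rewrite (first_kindE _ v0) (of_kind_head kind v0) andbT. Qed.

Definition rank_mono b (sigma : {perm 'I_n}) (P : point n l) :=
  forall i j : 'I_n, pos_rank b i <= pos_rank b j -> P (sigma i) <= P (sigma j).

Lemma rank_mono_min b sigma P (i : 'I_n) :
  rank_mono b sigma P -> pos_rank b i = 0 -> forall z, P (sigma i) <= P z.
Proof. by move=> mono rank0 z; rewrite -(permKV sigma z); apply: mono; rewrite rank0. Qed.

Lemma rank_mono_falseP sigma P (i0 i1 : 'I_n) : i0 = 0 :> nat -> i1 = 1 :> nat ->
  rank_mono false sigma P <->
  P (sigma i0) = P (sigma i1) :> nat /\
  (forall i j : 'I_n, 0 < i -> i <= j -> P (sigma i) <= P (sigma j)).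
Proof.
move=> v0 v1; split=> [mono | [eq01 homo] i j].
  split=> [|i j _ ij]; last by apply: mono; rewrite /pos_rank; lia.
  by apply/eqP; rewrite eqn_leq !mono //= v0 v1.
pose lift k := if k == i0 then i1 else k.
have P_lift k : P (sigma (lift k)) = P (sigma k) :> nat.
  by rewrite /lift; case: eqP => // ->.
have lift_pos k : 0 < lift k.
  rewrite /lift; case: eqP => [_ | /eqP ne]; first by rewrite v1.
  by rewrite lt0n; apply: contra ne => /eqP k0; apply/eqP/val_inj; rewrite /= k0 v0.
have rank_lift k : pos_rank false (lift k) = pos_rank false k.
  by rewrite /lift; case: eqP => // ->; rewrite v0 v1.
rewrite -rank_lift -(rank_lift j) -P_lift -(P_lift j) => r.
by apply: homo (lift_pos i) _; have := lift_pos j; move: r; rewrite /pos_rank; lia.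
Qed.

Lemma V_sys_first sigma P : V (sys_first sigma) P <-> rank_mono true sigma P.
Proof.
split=> [sol | mono _ [i [j [ij ->]]]]; last first.
  by apply/is_solution_le; apply: mono; rewrite /pos_rank /= ij.
move=> i j; apply: (ord_chain (f := fun k => P (sigma k))) (leq0n i) => {}i {}j _ ij.
by apply/is_solution_le; apply: sol; exists i, j.
Qed.

Lemma V_sys_second sigma P (i0 i1 : 'I_n) : i0 = 0 :> nat -> i1 = 1 :> nat ->
  V (sys_second sigma) P <-> rank_mono false sigma P.
Proof.
move=> v0 v1; rewrite (rank_mono_falseP _ _ v0 v1).
split=> [sol | [eq01 homo] _ [[j0 [j1 [w0 [w1 ->]]]] | [i [j [i_pos [ij ->]]]]]].
- split; first by apply: (sol (eq_eqn _ _)); left; exists i0, i1.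
  apply: (ord_chain (f := fun k => P (sigma k)) (c := 1)) => i j i_pos ij.
  by apply/is_solution_le; apply: sol; right; exists i, j.
- have -> : j0 = i0 by apply: val_inj; rewrite /= w0 v0.
  by have -> : j1 = i1 by apply: val_inj; rewrite /= w1 v1.
- by apply/is_solution_le; apply: homo => //; rewrite /= ij.
Qed.

Lemma Ysigma_rank_mono sigma P :
  of_kind sigma -> Ysigma e sigma P <-> rank_mono (first_kind e sigma) sigma P.
Proof.
rewrite /Ysigma /of_kind; case: ifP => [_ _ | _ /= kind2]; first exact: V_sys_first.
have [i0 v0] := ord_at (ltnW (second_kind_gt1 kind2)).
have [i1 v1] := ord_at (second_kind_gt1 kind2).
exact: V_sys_second v0 v1.
Qed.

Lemma is_solution_min (P : point n l) x y :
  x \in Var e.1 -> y \in Var e.2 -> (forall z, P x <= P z) -> P x = P y :> nat ->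
  is_solution P e.
Proof.
move=> xt ys x_min Pxy; rewrite /is_solution (eval_argmin xt) ?(eval_argmin ys) //.
by move=> z _; rewrite -Pxy.
Qed.

Lemma Ysigma_sub_solution sigma (P : point n l) :
  of_kind sigma -> Ysigma e sigma P -> is_solution P e.
Proof.
move=> kind /(Ysigma_rank_mono _ kind); have [i0 v0] := ord_at (of_kind_gt0 kind).
case fk: (first_kind e sigma) => mono.
  move: fk; rewrite (first_kindE _ v0) => /andP[t0 s0].
  exact: is_solution_min t0 s0 (rank_mono_min mono v0) erefl.
have kind2 : second_kind e sigma by rewrite /of_kind fk in kind.
have [i1 v1] := ord_at (second_kind_gt1 kind2).
have [eq01 _] := (rank_mono_falseP _ _ v0 v1).1 mono.
move: kind2; rewrite (second_kindE _ v0 v1) => /and4P[s0 _ t1 _].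
have rank1 : pos_rank false i1 = 0 by rewrite /pos_rank v1.
exact: is_solution_min t1 s0 (rank_mono_min mono rank1) (esym eq01).
Qed.

Section GenericPoint.
Hypothesis n_le_l : n <= l.

Lemma pos_rank_lt b (i : 'I_n) : pos_rank b i < l.
Proof.
apply: leq_ltn_trans (leq_trans (ltn_ord i) n_le_l).
by case: b => //=; apply: leq_pred.
Qed.

Definition generic_point b (sigma : {perm 'I_n}) : point n l :=
  fun x => Ordinal (pos_rank_lt b ((sigma^-1)%g x)).

Lemma generic_pointE b sigma i : generic_point b sigma (sigma i) = pos_rank b i :> nat.
Proof. by rewrite /= permK. Qed.

Lemma rank_mono_generic_point b sigma : rank_mono b sigma (generic_point b sigma).
Proof. by move=> i j; rewrite !generic_pointE. Qed.

Lemma rank_mono_refine b sigma P : rank_mono b sigma P ->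
  forall x y, generic_point b sigma x <= generic_point b sigma y -> P x <= P y.
Proof.
by move=> mono x y; rewrite -(permKV sigma x) -(permKV sigma y) !generic_pointE; apply: mono.
Qed.

Lemma generic_point_mem sigma :
  of_kind sigma -> Ysigma e sigma (generic_point (first_kind e sigma) sigma).
Proof. by move=> kind; apply/(Ysigma_rank_mono _ kind)/rank_mono_generic_point. Qed.

Lemma Ysigma_irreducible sigma : of_kind sigma -> irreducible (@Ysigma n l e sigma).
Proof.
move=> kind; apply: (irreducible_generic _ (generic_point_mem kind)).
  by rewrite /Ysigma; case: ifP; [exists (sys_first sigma) | exists (sys_second sigma)].
move=> P e' /(Ysigma_rank_mono _ kind) mono; apply: is_solution_refine.
exact: rank_mono_refine.
Qed.

Lemma Ysigma_generic_point_eq sigma sigma' : of_kind sigma -> of_kind sigma' ->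
  Ysigma e sigma' (generic_point (first_kind e sigma) sigma) -> sigma' = sigma.
Proof.
move=> kind kind' /(Ysigma_rank_mono _ kind'); set b := first_kind e sigma => mono.
pose pi := (sigma' * sigma^-1)%g.
have sigma_pi i : sigma (pi i) = sigma' i by rewrite permM permKV.
have rank_pi i : generic_point b sigma (sigma' i) = pos_rank b (pi i) :> nat.
  by rewrite -sigma_pi generic_pointE.
have [i0 v0] := ord_at (of_kind_gt0 kind).
have pi_head : pi i0 = i0.
  have rank0 : pos_rank b (pi i0) = 0.
    have rank0' : pos_rank (first_kind e sigma') i0 = 0 by rewrite /pos_rank v0; case: ifP.
    apply/eqP; rewrite -leqn0; have := rank_mono_min mono rank0' (sigma i0).
    by rewrite rank_pi generic_pointE v0 /pos_rank; case: ifP.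
  apply: val_inj; move: rank0; rewrite /b /pos_rank /= v0.
  case fk: (first_kind e sigma) => // rank0.
  have kind2 : second_kind e sigma by rewrite /of_kind fk in kind.
  have [i1 v1] := ord_at (second_kind_gt1 kind2).
  case: (posnP (pi i0)) => // pi_pos; exfalso.
  have pi_i1 : pi i0 = i1 by apply: val_inj; rewrite /= v1; lia.
  move: kind2; rewrite (second_kindE _ v0 v1) -pi_i1 sigma_pi (of_kind_head kind' v0).
  by rewrite !andbF.
have same_kind : first_kind e sigma' = b.
  by rewrite /b !(of_kind_first_kindE _ v0) // -sigma_pi pi_head.
have pi1 : pi = 1%g.
  apply: (rank_perm_eq1 (b := b) v0 pi_head) => i j r.
  by rewrite -!rank_pi; apply: mono; rewrite same_kind.
by apply/permP => i; rewrite -sigma_pi pi1 perm1.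
Qed.

End GenericPoint.

Lemma min_sorting_perm (P : point n l) (a b i0 : 'I_n) :
  i0 = 0 :> nat -> (forall z, P a <= P z) -> P a = P b :> nat ->
  exists sigma, [/\ rank_mono true sigma P, sigma i0 = a &
                    forall i1 : 'I_n, i1 = 1 :> nat -> a != b -> sigma i1 = b].
Proof.
move=> v0 a_min Pab.
(* Sorting by [3 * P z + tag z] puts a first and b second among the minima of P. *)
pose tag z := if z == a then 0 else if z == b then 1 else 2.
have tag_le2 z : tag z <= 2 by rewrite /tag; case: ifP => //; case: ifP.
pose K z := 3 * P z + tag z.
have [sigma K_homo] := sorting_perm K.
have sigma_a : sigma i0 = a.
  apply: (sorting_perm_at K_homo) => [|k _ ka]; first by rewrite v0.
  have := a_min (sigma k); rewrite /K /tag eqxx (negbTE ka); case: ifP => _; lia.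
exists sigma; split=> // [i j ij | i1 v1 ab].
  have := K_homo i j ij; have := tag_le2 (sigma i); have := tag_le2 (sigma j).
  by rewrite /K; lia.
apply: (sorting_perm_at K_homo) => [|k k_pos kb].
  rewrite v1 lt0n; apply: contra ab => /eqP b0.
  rewrite -sigma_a -(permKV sigma b); apply/eqP; congr (sigma _).
  by apply: val_inj; rewrite /= b0 v0.
have ka : sigma k != a.
  by rewrite -sigma_a (inj_eq perm_inj); apply: contraTneq k_pos => ->; rewrite v1 v0.
have := a_min (sigma k); rewrite /K /tag eq_sym (negbTE ab) eqxx (negbTE ka) (negbTE kb); lia.
Qed.

Lemma mem_Ysigma_first (P : point n l) a :
  a \in Var e.1 -> a \in Var e.2 -> (forall z, P a <= P z) ->
  exists sigma, of_kind sigma /\ Ysigma e sigma P.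
Proof.
move=> a1 a2 a_min; have [i0 v0] := ord_at (leq_ltn_trans (leq0n a) (ltn_ord a)).
have [sigma [mono sigma_a _]] := min_sorting_perm v0 a_min (erefl _).
have fk : first_kind e sigma by rewrite (first_kindE _ v0) sigma_a a1 a2.
have kind : of_kind sigma by rewrite /of_kind fk.
by exists sigma; split=> //; apply/(Ysigma_rank_mono _ kind); rewrite fk.
Qed.

Lemma mem_Ysigma_second (P : point n l) a b :
  a \in Var e.2 -> a \notin Var e.1 -> b \in Var e.1 -> b \notin Var e.2 ->
  (forall z, P a <= P z) -> P a = P b :> nat ->
  exists sigma, of_kind sigma /\ Ysigma e sigma P.
Proof.
move=> a2 a1 b1 b2 a_min Pab.
have ab : a != b by apply: contraNneq a1 => ->.
have [i0 v0] := ord_at (leq_ltn_trans (leq0n a) (ltn_ord a)).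
have [i1 v1] : exists i1 : 'I_n, i1 = 1 :> nat.
  apply: ord_at; move: ab; rewrite -val_eqE /=.
  by have := ltn_ord a; have := ltn_ord b; lia.
have [sigma [mono sigma_a sigma_b]] := min_sorting_perm v0 a_min Pab.
have {}sigma_b := sigma_b i1 v1 ab.
have fk : first_kind e sigma = false by rewrite (first_kindE _ v0) sigma_a (negbTE a1).
have sk : second_kind e sigma by rewrite (second_kindE _ v0 v1) sigma_a sigma_b a2 a1 b1 b2.
have kind : of_kind sigma by rewrite /of_kind sk orbT.
exists sigma; split=> //; apply/(Ysigma_rank_mono _ kind).
rewrite fk (rank_mono_falseP _ _ v0 v1) sigma_a sigma_b; split=> // i j _; exact: mono.
Qed.

Lemma solution_min (P : point n l) :
  (forall x, (x \in Var e.1) || (x \in Var e.2)) -> is_solution P e ->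
  exists x y, [/\ x \in Var e.1, y \in Var e.2, P x = P y :> nat & forall z, P x <= P z].
Proof.
move=> cover sol; have [x xt Px] := eval_attained P e.1; have [y ys Py] := eval_attained P e.2.
exists x, y; split; rewrite -?Px -?Py //.
by move=> z; case/orP: (cover z) => zin; [|rewrite sol]; apply: eval_le.
Qed.

Lemma solution_mem_Ysigma (P : point n l) :
  (forall x, (x \in Var e.1) || (x \in Var e.2)) -> is_solution P e ->
  exists sigma, of_kind sigma /\ Ysigma e sigma P.
Proof.
move=> cover /(solution_min cover) [x [y [xt ys Pxy x_min]]].
case xs: (x \in Var e.2); first exact: mem_Ysigma_first xt xs x_min.
have y_min z : P y <= P z by rewrite -Pxy.
case yt: (y \in Var e.1); first exact: mem_Ysigma_first yt ys y_min.
exact: mem_Ysigma_second ys (negbT yt) xt (negbT xs) y_min (esym Pxy).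
Qed.

End Components.

Theorem theorem1 (n l : nat) (e : equation n) :
  0 < n -> n <= l ->
  (forall x : 'I_n, (x \in Var e.1) || (x \in Var e.2)) ->
  let Y := @V n l (fun e' => e' = e) in
  let kinds := fun sigma : {perm 'I_n} => first_kind e sigma || second_kind e sigma in
  set_eq Y (fun P => exists sigma, kinds sigma /\ @Ysigma n l e sigma P) /\
  (forall sigma, kinds sigma -> irreducible (@Ysigma n l e sigma)) /\
  (forall sigma sigma', kinds sigma -> kinds sigma' -> sigma <> sigma' ->
     ~ psubset (@Ysigma n l e sigma) (@Ysigma n l e sigma')).
Proof.
move=> _ n_le_l cover Y kinds; split; [|split].
- move=> P; split=> [/(_ e erefl) | [sigma [kind Ysigma_P]] _ ->].
    exact: solution_mem_Ysigma.
  exact: Ysigma_sub_solution kind Ysigma_P.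
- by move=> sigma; apply: Ysigma_irreducible.
- move=> sigma sigma' kind kind' neq sub; apply/neq/esym.
  exact: Ysigma_generic_point_eq kind kind' (sub _ (generic_point_mem n_le_l kind)).
Qed.
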